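(* For $n\ge1$, $\left|\Pi_n\wr C_2(1^12^2,1^22^1)\right|=2^n+2(B(n)-1)$, where $B(n)$ is the $n$th Bell number.
   Context: For $n\ge0$ let $[n]=\{1,\dots,n\}$. A $2$-colored set partition of $[n]$ is a set partition of $[n]$ together with an assignment of a color from $\{1,2\}$ to each element; $\Pi_n\wr C_2$ is the set of these. For a set $S$ of patterns, $\Pi_n\wr C_2(S)$ is the set of such colored partitions avoiding every pattern in $S$ in the pattern sense. For the patterns used here: $\sigma$ contains $1^12^2$ iff there are $i<j$ in different blocks with $i$ colored $1$ and $j$ colored $2$; $\sigma$ contains $1^22^1$ iff there are $i<j$ in different blocks with $i$ colored $2$ and $j$ colored $1$. $B(n)$ is the number of set partitions of $[n]$. *)

From mathcomp Require Import all_boot.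
Set Implicit Arguments. Unset Strict Implicit. Unset Printing Implicit Defensive.

(* The ground set [n] = {1,...,n} is modelled by 'I_n = {0,...,n-1}
   (order-preserving shift by one). *)

Definition set_partitions (n : nat) :=
  [set P : {set {set 'I_n}} | partition P [set: 'I_n]].

Definition bell (n : nat) : nat := #|set_partitions n|.

(* Colors {1,2} are modelled by 'I_2: value 0 is color 1, value 1 is color 2. *)
Definition color1 : 'I_2 := ord0.
Definition color2 : 'I_2 := ord_max.

Definition colored_partitions (n : nat) :=
  [set Pc : {set {set 'I_n}} * {ffun 'I_n -> 'I_2} | Pc.1 \in set_partitions n].

(* sigma contains the pattern a^x b^y (with {a,b} = {1,2}, a<b in different
   blocks) iff there are i < j in different blocks with i colored x, j colored y. *)
Definition contains_12 (n : nat) (P : {set {set 'I_n}}) (c : {ffun 'I_n -> 'I_2})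
    (x y : 'I_2) : bool :=
  [exists i : 'I_n, exists j : 'I_n,
     [&& i < j, pblock P i != pblock P j, c i == x & c j == y]].

Definition contains_1122 n P c := @contains_12 n P c color1 color2.
Definition contains_1221 n P c := @contains_12 n P c color2 color1.

Definition avoiders (n : nat) :=
  [set Pc in colored_partitions n |
     ~~ contains_1122 Pc.1 Pc.2 && ~~ contains_1221 Pc.1 Pc.2].

From mathcomp Require Import all_boot.
Set Implicit Arguments. Unset Strict Implicit. Unset Printing Implicit Defensive.

(* Avoiding both 1^1 2^2 and 1^2 2^1 says exactly that any two elements lying in
   different blocks carry the same colour.  For the one-block partition this is
   vacuous, giving 2^n colourings.  For any other partition the relation "lie in
   different blocks" connects every pair of elements (two elements of the same
   block are both linked to an element of another block), so the colouring must
   be constant: 2 colourings for each of the B(n) - 1 remaining partitions. *)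

Section Partitions.
Variable T : finType.

Definition one_block : {set {set T}} := [set [set: T]].

Lemma one_block_partition (t0 : T) : partition one_block [set: T].
Proof.
rewrite /partition /one_block cover1 eqxx trivIset1 in_set1 /=.
by apply/eqP => /setP /(_ t0); rewrite !inE.
Qed.

Lemma pblock_one_block (x : T) : pblock one_block x = [set: T].
Proof. by rewrite (@def_pblock _ _ [set: T]) ?trivIset1 ?in_set1 ?inE. Qed.

Lemma partition_other_block (P : {set {set T}}) (x : T) :
  partition P [set: T] -> P != one_block -> exists z, pblock P z != pblock P x.
Proof.
case/and3P => /eqP covP trivP set0P neqP.
apply/existsP; apply: contraR neqP => /existsPn same.
have pblockT : pblock P x = [set: T].
  by apply/setP => z; rewrite inE -(eqP (negPn (same z))) mem_pblock covP inE.
have pblock_in : pblock P x \in P by rewrite pblock_mem // covP inE.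
apply/eqP/setP => B; rewrite /one_block in_set1.
apply/idP/eqP => [BP | ->]; last by rewrite -pblockT.
have [B0 | [b bB]] := set_0Vmem B; first by rewrite -B0 BP in set0P.
by rewrite -(def_pblock trivP BP bB) (eqP (negPn (same b))).
Qed.

Lemma constant_across_blocks (R : Type) (P : {set {set T}}) (c : T -> R) :
  partition P [set: T] -> P != one_block ->
  (forall i j, pblock P i != pblock P j -> c i = c j) ->
  forall i j, c i = c j.
Proof.
move=> partP neqP cross i j.
have [same_ij | ] := eqVneq (pblock P i) (pblock P j); last exact: cross.
have [z zj] := partition_other_block j partP neqP.
by rewrite (cross i z) ?(cross z j) // same_ij eq_sym.
Qed.

End Partitions.

Section ConstantFunctions.
Variables (T R : finType) (t0 : T).

Definition constant_ffuns : {set {ffun T -> R}} := [set [ffun=> y] | y : R].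

Lemma constant_ffunsP (c : {ffun T -> R}) :
  reflect (forall i j, c i = c j) (c \in constant_ffuns).
Proof.
apply: (iffP imsetP) => [[y _ ->] i j | cst]; first by rewrite !ffunE.
by exists (c t0) => //; apply/ffunP => i; rewrite ffunE (cst i t0).
Qed.

Lemma card_constant_ffuns : #|constant_ffuns| = #|R|.
Proof. by apply: card_imset => y y' /ffunP /(_ t0); rewrite !ffunE. Qed.

End ConstantFunctions.

Lemma avoidsP (n : nat) (P : {set {set 'I_n}}) (c : {ffun 'I_n -> 'I_2}) :
  reflect (forall i j, pblock P i != pblock P j -> c i = c j)
          (~~ contains_1122 P c && ~~ contains_1221 P c).
Proof.
have two_colours (a b : 'I_2) : a != b -> (a == color1) && (b == color2)
                                         || (a == color2) && (b == color1).
  by case: a b => [[|[|?]] ?] // [[|[|?]] ?].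
apply: (iffP andP) => [[/existsPn no12 /existsPn no21] | cross].
  have ordered (i j : 'I_n) : i < j -> pblock P i != pblock P j -> c i = c j.
    move=> lt_ij dij; apply/eqP/negPn/negP => /two_colours.
    case/orP => /andP [/eqP ci /eqP cj]; [move: (no12 i) | move: (no21 i)];
      by move/existsPn/(_ j); rewrite lt_ij dij ci cj.
  move=> i j dij; case: (ltngtP i j) => [lt_ij | lt_ji | /val_inj eq_ij].
  - exact: ordered.
  - by apply/esym/ordered; rewrite 1?eq_sym.
  - by rewrite eq_ij eqxx in dij.
by split; apply/existsPn => i; apply/existsPn => j;
  apply/negP => /and4P [_ /cross -> /eqP -> /eqP].
Qed.

Lemma avoidersE (n : nat) (t0 : 'I_n) :
  avoiders n = [set (one_block 'I_n, c) | c : {ffun 'I_n -> 'I_2}]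
           :|: setX (set_partitions n :\ one_block 'I_n) (constant_ffuns 'I_n 'I_2).
Proof.
apply/setP => -[P c]; rewrite !inE /=.
have [-> | neqP] := eqVneq P (one_block 'I_n).
  rewrite one_block_partition // imset_f //=.
  by apply/avoidsP => i j; rewrite !pblock_one_block eqxx.
have -> : ((P, c) \in [set (one_block 'I_n, c) | c : {ffun 'I_n -> 'I_2}]) = false.
  by apply/imsetP => -[c' _ [P_one _]]; rewrite P_one eqxx in neqP.
rewrite /=; case partP : (partition P [set: 'I_n]) => //=.
apply/avoidsP/(constant_ffunsP t0) => [cross | cst i j _]; last exact: cst.
exact: constant_across_blocks partP neqP cross.
Qed.

Theorem mainTheorem6 (n : nat) : 1 <= n ->
  #|avoiders n| = 2 ^ n + 2 * (bell n - 1).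
Proof.
move=> n_gt0; have t0 : 'I_n := Ordinal n_gt0.
have disjoint_parts :
    [set (one_block 'I_n, c) | c : {ffun 'I_n -> 'I_2}]
    :&: setX (set_partitions n :\ one_block 'I_n) (constant_ffuns 'I_n 'I_2) = set0.
  by apply/setP => -[P c]; rewrite !inE; apply/andP => -[/imsetP [? _ [-> _]]];
    rewrite eqxx.
rewrite (avoidersE t0) cardsU disjoint_parts cards0 subn0.
rewrite card_imset; last by move=> c c' [].
rewrite card_ffun !card_ord cardsX card_constant_ffuns // card_ord.
rewrite /bell (cardsD1 (one_block 'I_n) (set_partitions n)) inE one_block_partition //.
by rewrite add1n subn1 mulnC.
Qed.
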